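(* Let $a,b,c,d>0$ and let $G_B:\mathbb R^2\to\mathbb R^2$ be given by $G_B(0)=0$ and $G_B(u)=\frac{1}{|u|}\big((au_1^2+bu_2^2)u_1,\ (cu_1^2+du_2^2)u_2\big)$ for $u\neq0$. (i) If $\frac{\max\{a,d\}}{2}-2\sqrt{ad}\le b+c\le 2\sqrt{ad}$, then $G_B$ is monotone. If $\frac{\max\{a,d\}}{2}-2\sqrt{ad}< b+c< 2\sqrt{ad}$, then $G_B$ is $3$-monotone. (ii) Let $M=\max\{a,d\}$ and $m=\min\{a,d\}$. (a) If $M/m\le16$, then the non-strict condition in (i) is equivalent to $b+c\le2\sqrt{ad}$, and the strict condition in (i) is equivalent to $b+c<2\sqrt{ad}$. (b) If $M/m=64$, then the non-strict condition in (i) is equivalent to $b+c=2\sqrt{ad}$, while the strict condition in (i) cannot hold. (c) If $M/m>64$, then the non-strict condition in (i) cannot hold.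
   Context: A map $F:\mathbb R^n\to\mathbb R^n$ is monotone if $(F(u)-F(v))\cdot(u-v)\ge0$ for all $u,v$; for $\alpha>0$ it is $\alpha$-monotone if there is $C>0$ with $(F(u)-F(v))\cdot(u-v)\ge C|u-v|^\alpha$ for all $u,v\in\mathbb R^n$. $|\cdot|$ is the Euclidean norm. *)

From Stdlib Require Import Reals Lra.
Open Scope R_scope.

Definition vec2 := (R * R)%type.

Definition dot2 (u v : vec2) : R := fst u * fst v + snd u * snd v.
Definition sub2 (u v : vec2) : vec2 := (fst u - fst v, snd u - snd v).
Definition norm2 (u : vec2) : R := sqrt (fst u ^ 2 + snd u ^ 2).

(* x^alpha for x >= 0 and real alpha > 0, with 0^alpha = 0
   (Stdlib's Rpower 0 alpha is 1, hence the case split). *)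
Definition rpow (x alpha : R) : R :=
  if Req_EM_T x 0 then 0 else Rpower x alpha.

Definition monotone2 (F : vec2 -> vec2) : Prop :=
  forall u v : vec2, 0 <= dot2 (sub2 (F u) (F v)) (sub2 u v).

Definition alpha_monotone2 (alpha : R) (F : vec2 -> vec2) : Prop :=
  exists C : R, 0 < C /\
    forall u v : vec2, C * rpow (norm2 (sub2 u v)) alpha <= dot2 (sub2 (F u) (F v)) (sub2 u v).

Definition G_B (a b c d : R) (u : vec2) : vec2 :=
  let u1 := fst u in let u2 := snd u in
  if Req_EM_T (norm2 u) 0 then (0, 0)
  else ((a * u1 ^ 2 + b * u2 ^ 2) * u1 / norm2 u,
        (c * u1 ^ 2 + d * u2 ^ 2) * u2 / norm2 u).

Definition cond_nonstrict (a b c d : R) : Prop :=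
  Rmax a d / 2 - 2 * sqrt (a * d) <= b + c <= 2 * sqrt (a * d).
Definition cond_strict (a b c d : R) : Prop :=
  Rmax a d / 2 - 2 * sqrt (a * d) < b + c < 2 * sqrt (a * d).

From Coquelicot Require Import Coquelicot.
From Stdlib Require Import Reals Lra Psatz List.
Import ListNotations.
Open Scope R_scope.

(* Write S = b + c and s = sqrt(ad).  The heart of the file is that G is monotone
   whenever b, c >= 0 and
       S <= 2 s   and   max(a, d) <= 2 S + 4 s,                             (#)
   which is exactly the non-strict condition of part (i).  Given u, v put w = u - v
   and f(t) = G(v + t w).w, so that monotonicity reads f(0) <= f(1).
   - If the segment [v, u] avoids the origin, f is differentiable and |z|^3 f'(t) is
     a quadratic form [Nq] in (w1, w2) at z = v + t w.  Its discriminant is the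
     polynomial [Dq] at (z1^2, z2^2); for fixed S = b + c, [Dq] is a convex
     combination of its values at c = 0 and b = 0 plus a nonnegative term, and in
     these extreme cases it is X times a cubic with nonnegative coefficients under (#).  So f' >= 0 and the mean
     value theorem concludes.
   - If v and w are collinear, G(l w).w = l |l| G(w).w and l |l| is nondecreasing.
   For the strict condition, G_B(a,b,c,d) = G_B(a-e,b-e,c-e,d-e) + e |u| u; for small
   e > 0 the shifted parameters still satisfy (#), and u |-> |u| u is 3-monotone
   with constant 1/2.  Part (ii) compares max(a,d)/2 - 2 s with 0 and with 2 s,
   using s^2 = max(a,d) min(a,d). *)

Lemma quad_form_nonneg (A B C w1 w2 : R) :
  0 <= A -> 0 <= C -> B ^ 2 <= 4 * A * C -> 0 <= A * w1 ^ 2 + B * w1 * w2 + C * w2 ^ 2.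
Proof.
  intros hA hC hdisc.
  destruct (Req_dec A 0) as [hA0 | hA0].
  - subst A. assert (B = 0) by nra. subst B. nra.
  - assert (completed_square : 4 * A * (A * w1 ^ 2 + B * w1 * w2 + C * w2 ^ 2)
                               = (2 * A * w1 + B * w2) ^ 2 + (4 * A * C - B ^ 2) * w2 ^ 2) by ring.
    assert (0 <= (2 * A * w1 + B * w2) ^ 2) by apply pow2_ge_0.
    assert (0 <= (4 * A * C - B ^ 2) * w2 ^ 2) by (apply Rmult_le_pos; [lra | apply pow2_ge_0]).
    nra.
Qed.

Lemma cubic_form_nonneg (k3 k2 k1 k0 X Y : R) :
  0 <= k3 -> 0 <= k2 -> 0 <= k1 -> 0 <= k0 -> 0 <= X -> 0 <= Y ->
  0 <= k3 * X ^ 3 + k2 * X ^ 2 * Y + k1 * X * Y ^ 2 + k0 * Y ^ 3.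
Proof.
  intros. assert (0 <= X ^ 2) by (apply pow_le; assumption).
  assert (0 <= X ^ 3) by (apply pow_le; assumption).
  assert (0 <= Y ^ 2) by (apply pow_le; assumption).
  assert (0 <= Y ^ 3) by (apply pow_le; assumption).
  repeat (assumption || apply Rplus_le_le_0_compat || apply Rmult_le_pos).
Qed.

(* [Dq a b c d (x^2) (y^2)] is 4 A C - B^2 for the coefficients A, B, C of the
   quadratic form [Nq] below, i.e. minus its discriminant. *)
Definition Dq (a b c d X Y : R) : R :=
  4 * (2 * a * X ^ 2 + 3 * a * X * Y + b * Y ^ 2) * (c * X ^ 2 + 3 * d * X * Y + 2 * d * Y ^ 2)
  - X * Y * ((2 * b + c - a) * X + (b + 2 * c - d) * Y) ^ 2.

Section ExtremeDiscriminant.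

(* Here S stands for b + c and s for sqrt(ad); the hypotheses are (#). *)
Variables (a d s S : R).
Hypotheses (ha : 0 < a) (hd : 0 < d) (hs : 0 <= s) (hss : s * s = a * d) (hS : 0 < S)
  (hup : S <= 2 * s) (hla : a <= 2 * S + 4 * s) (hld : d <= 2 * S + 4 * s).

(* The three nontrivial coefficients of [Dq a 0 S d] / X are nonnegative under (#). *)
Lemma coef_Y3 : 0 <= 24 * a * d - (2 * S - d) ^ 2.
Proof. assert (-4 * s <= 2 * S - d <= 4 * s) by lra. nra. Qed.

Lemma coef_X2Y : 0 <= 24 * a * d + 12 * a * S - (S - a) ^ 2.
Proof. assert (a * (a - 2 * S - 4 * s) <= 0) by nra. nra. Qed.

Lemma coef_XY2 : 0 <= 52 * a * d - 2 * (S - a) * (2 * S - d).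
Proof.
  destruct (Rle_dec a S), (Rle_dec d (2 * S)).
  - assert ((S - a) * (2 * S - d) <= S * (2 * S)) by nra. nra.
  - assert ((S - a) * (2 * S - d) <= 0) by nra. nra.
  - assert ((S - a) * (2 * S - d) <= 0) by nra. nra.
  - assert ((S - a) * (2 * S - d) <= a * d) by nra. nra.
Qed.

Lemma Dq_extreme_nonneg (X Y : R) : 0 <= X -> 0 <= Y -> 0 <= Dq a 0 S d X Y.
Proof.
  intros hX hY.
  replace (Dq a 0 S d X Y) with
    (X * (8 * a * S * X ^ 3 + (24 * a * d + 12 * a * S - (S - a) ^ 2) * X ^ 2 * Y
          + (52 * a * d - 2 * (S - a) * (2 * S - d)) * X * Y ^ 2
          + (24 * a * d - (2 * S - d) ^ 2) * Y ^ 3)) by (unfold Dq; ring).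
  apply Rmult_le_pos; [assumption |].
  apply cubic_form_nonneg; auto using coef_Y3, coef_X2Y, coef_XY2.
  nra.
Qed.

End ExtremeDiscriminant.

(* |z|^3 times the derivative at t = 0 of t |-> G(z + t w).w, where z = (x, y);
   a quadratic form in w. *)
Definition Nq (a b c d x y w1 w2 : R) : R :=
  (2 * a * (x ^ 2) ^ 2 + 3 * a * x ^ 2 * y ^ 2 + b * (y ^ 2) ^ 2) * w1 ^ 2
  + ((2 * b + c - a) * x ^ 3 * y + (b + 2 * c - d) * x * y ^ 3) * w1 * w2
  + (c * (x ^ 2) ^ 2 + 3 * d * x ^ 2 * y ^ 2 + 2 * d * (y ^ 2) ^ 2) * w2 ^ 2.

(* |z| G(z).w as a polynomial. *)
Definition Gnum (a b c d x y w1 w2 : R) : R :=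
  (a * x ^ 2 + b * y ^ 2) * x * w1 + (c * x ^ 2 + d * y ^ 2) * y * w2.

Lemma segment_derivative (a b c d v1 v2 w1 w2 t : R) :
  0 < (v1 + t * w1) ^ 2 + (v2 + t * w2) ^ 2 ->
  is_derive
    (fun t => Gnum a b c d (v1 + t * w1) (v2 + t * w2) w1 w2
              / sqrt ((v1 + t * w1) ^ 2 + (v2 + t * w2) ^ 2)) t
    (Nq a b c d (v1 + t * w1) (v2 + t * w2) w1 w2
     / sqrt ((v1 + t * w1) ^ 2 + (v2 + t * w2) ^ 2) ^ 3).
Proof.
  intros hpos.
  assert (hr : 0 < sqrt ((v1 + t * w1) ^ 2 + (v2 + t * w2) ^ 2)) by (apply sqrt_lt_R0; lra).
  assert (hrr := sqrt_sqrt ((v1 + t * w1) ^ 2 + (v2 + t * w2) ^ 2) ltac:(lra)).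
  unfold Gnum. auto_derive;
    replace ((v1 + t * w1) * ((v1 + t * w1) * 1) + (v2 + t * w2) * ((v2 + t * w2) * 1))
      with ((v1 + t * w1) ^ 2 + (v2 + t * w2) ^ 2) by ring.
  - repeat split; lra.
  - set (r := sqrt ((v1 + t * w1) ^ 2 + (v2 + t * w2) ^ 2)) in *.
    replace (Nq a b c d (v1 + t * w1) (v2 + t * w2) w1 w2) with
      (r * r * ((3 * a * (v1 + t * w1) ^ 2 + b * (v2 + t * w2) ^ 2) * w1 ^ 2
                + 2 * (b + c) * (v1 + t * w1) * (v2 + t * w2) * w1 * w2
                + (c * (v1 + t * w1) ^ 2 + 3 * d * (v2 + t * w2) ^ 2) * w2 ^ 2)
       - Gnum a b c d (v1 + t * w1) (v2 + t * w2) w1 w2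
         * ((v1 + t * w1) * w1 + (v2 + t * w2) * w2))
      by (rewrite hrr; unfold Nq, Gnum; ring).
    unfold Gnum. field. lra.
Qed.

Lemma norm2_sq (z : vec2) : norm2 z * norm2 z = fst z ^ 2 + snd z ^ 2.
Proof.
  unfold norm2. apply sqrt_sqrt.
  apply Rplus_le_le_0_compat; apply pow2_ge_0.
Qed.

Lemma norm2_ge0 (z : vec2) : 0 <= norm2 z.
Proof. apply sqrt_pos. Qed.

Lemma norm2_scale (l w1 w2 : R) : norm2 (l * w1, l * w2) = Rabs l * norm2 (w1, w2).
Proof.
  unfold norm2; cbn [fst snd].
  replace ((l * w1) ^ 2 + (l * w2) ^ 2) with (Rsqr l * (w1 ^ 2 + w2 ^ 2))
    by (unfold Rsqr; ring).
  rewrite sqrt_mult_alt, sqrt_Rsqr_abs by apply Rle_0_sqr. reflexivity.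
Qed.

Lemma signed_square_le (x y : R) : x <= y -> x * Rabs x <= y * Rabs y.
Proof.
  intros hxy.
  destruct (Rcase_abs x), (Rcase_abs y);
    [rewrite (Rabs_left x), (Rabs_left y) by assumption
    |rewrite (Rabs_left x), (Rabs_right y) by assumption
    |rewrite (Rabs_right x), (Rabs_left y) by assumption
    |rewrite (Rabs_right x), (Rabs_right y) by assumption]; nra.
Qed.

Lemma collinear_multiple (v1 v2 w1 w2 : R) :
  v1 * w2 - v2 * w1 = 0 -> 0 < w1 ^ 2 + w2 ^ 2 ->
  exists mu, v1 = mu * w1 /\ v2 = mu * w2.
Proof.
  intros hcol hw.
  exists ((v1 * w1 + v2 * w2) / (w1 ^ 2 + w2 ^ 2)).
  assert (w2 * (v1 * w2 - v2 * w1) = 0) by (rewrite hcol; ring).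
  assert (w1 * (v1 * w2 - v2 * w1) = 0) by (rewrite hcol; ring).
  split; field_simplify_eq; lra.
Qed.

Lemma segment_avoids_origin (v1 v2 w1 w2 : R) :
  v1 * w2 - v2 * w1 <> 0 -> forall t, 0 < (v1 + t * w1) ^ 2 + (v2 + t * w2) ^ 2.
Proof.
  intros hcol t.
  assert (0 <= (v1 + t * w1) ^ 2) by apply pow2_ge_0.
  assert (0 <= (v2 + t * w2) ^ 2) by apply pow2_ge_0.
  destruct (Req_dec ((v1 + t * w1) ^ 2 + (v2 + t * w2) ^ 2) 0) as [h0 | h0]; [| lra].
  exfalso. apply hcol.
  assert (v1 = - (t * w1)) by nra. assert (v2 = - (t * w2)) by nra.
  subst v1 v2. ring.
Qed.

Lemma G_B_dot (a b c d : R) (z w : vec2) :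
  norm2 z <> 0 -> dot2 (G_B a b c d z) w = Gnum a b c d (fst z) (snd z) (fst w) (snd w) / norm2 z.
Proof.
  intros hz. unfold G_B. destruct (Req_EM_T (norm2 z) 0) as [e | _]; [contradiction |].
  unfold dot2, Gnum. cbn [fst snd]. field. exact hz.
Qed.

(* G_B(l w) = l |l| G_B(w): homogeneity of degree 2 and oddness, paired with w. *)
Lemma G_B_scale (a b c d l w1 w2 : R) :
  dot2 (G_B a b c d (l * w1, l * w2)) (w1, w2)
  = l * Rabs l * dot2 (G_B a b c d (w1, w2)) (w1, w2).
Proof.
  destruct (Req_dec (norm2 (w1, w2)) 0) as [hw | hw].
  - assert (w1 = 0 /\ w2 = 0) as [-> ->].
    { pose proof (norm2_sq (w1, w2)) as hsq. rewrite hw in hsq. cbn [fst snd] in hsq. nra. }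
    unfold dot2. cbn [fst snd]. ring.
  - destruct (Req_dec l 0) as [-> | hl].
    + rewrite Rabs_R0. unfold G_B. rewrite norm2_scale, Rabs_R0, Rmult_0_l.
      destruct (Req_EM_T 0 0) as [_ | n]; [| contradiction].
      unfold dot2; cbn [fst snd]. ring.
    + assert (hl' : 0 < Rabs l) by (apply Rabs_pos_lt; exact hl).
      rewrite !G_B_dot, norm2_scale; cbn [fst snd].
      * unfold Gnum. destruct (Rcase_abs l).
        -- rewrite Rabs_left by assumption. field. split; lra.
        -- rewrite Rabs_right by assumption. field. split; lra.
      * exact hw.
      * rewrite norm2_scale. apply Rmult_integral_contrapositive. split; lra.
Qed.

Lemma G_B_self_dot_nonneg (a b c d : R) (w : vec2) :
  0 <= a -> 0 <= b + c -> 0 <= d -> 0 <= dot2 (G_B a b c d w) w.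
Proof.
  intros ha hbc hd. destruct w as [w1 w2].
  destruct (Req_dec (norm2 (w1, w2)) 0) as [hw | hw].
  - unfold G_B. destruct (Req_EM_T _ 0) as [_ | n]; [| contradiction].
    unfold dot2; cbn [fst snd]. lra.
  - rewrite G_B_dot by exact hw. unfold Gnum; cbn [fst snd].
    apply Rdiv_le_0_compat; [| pose proof (norm2_ge0 (w1, w2)); lra].
    replace ((a * w1 ^ 2 + b * w2 ^ 2) * w1 * w1 + (c * w1 ^ 2 + d * w2 ^ 2) * w2 * w2)
      with (a * (w1 ^ 2) ^ 2 + (b + c) * (w1 ^ 2 * w2 ^ 2) + d * (w2 ^ 2) ^ 2) by ring.
    assert (0 <= w1 ^ 2) by apply pow2_ge_0. assert (0 <= w2 ^ 2) by apply pow2_ge_0.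
    assert (0 <= (w1 ^ 2) ^ 2) by apply pow2_ge_0. assert (0 <= (w2 ^ 2) ^ 2) by apply pow2_ge_0.
    assert (0 <= w1 ^ 2 * w2 ^ 2) by (apply Rmult_le_pos; assumption).
    nra.
Qed.

Lemma increment_collinear (a b c d v1 v2 w1 w2 : R) :
  0 <= a -> 0 <= b + c -> 0 <= d -> v1 * w2 - v2 * w1 = 0 ->
  dot2 (G_B a b c d (v1, v2)) (w1, w2) <= dot2 (G_B a b c d (v1 + w1, v2 + w2)) (w1, w2).
Proof.
  intros ha hbc hd hcol.
  destruct (Req_dec (w1 ^ 2 + w2 ^ 2) 0) as [hw | hw].
  - assert (w1 = 0) by nra. assert (w2 = 0) by nra. subst w1 w2.
    unfold dot2; cbn [fst snd]. lra.
  - assert (hw' : 0 < w1 ^ 2 + w2 ^ 2) by (pose proof (pow2_ge_0 w1); pose proof (pow2_ge_0 w2); lra).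
    destruct (collinear_multiple v1 v2 w1 w2 hcol hw') as [mu [-> ->]].
    replace (mu * w1 + w1, mu * w2 + w2) with ((mu + 1) * w1, (mu + 1) * w2) by (f_equal; ring).
    rewrite !G_B_scale.
    pose proof (G_B_self_dot_nonneg a b c d (w1, w2) ha hbc hd).
    pose proof (signed_square_le mu (mu + 1) ltac:(lra)).
    nra.
Qed.

Section MonotonicityRegion.

(* The parameters satisfy (#), with s = sqrt(ad) given through s >= 0, s^2 = ad. *)
Variables a b c d s : R.
Hypotheses (ha : 0 < a) (hd : 0 < d) (hb : 0 <= b) (hc : 0 <= c) (hbc : 0 < b + c)
  (hs : 0 <= s) (hss : s * s = a * d)
  (hup : b + c <= 2 * s) (hla : a <= 2 * (b + c) + 4 * s) (hld : d <= 2 * (b + c) + 4 * s).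

(* Reduction to the extreme case via the identity
     S Dq(a,b,c,d;X,Y) = c Dq(a,0,S,d;X,Y) + b Dq(d,0,S,a;Y,X) + S b c X Y (X + Y)^2,
   whose middle term is the case c = 0 rewritten by the symmetry
   (a, b, c, d, X, Y) <-> (d, c, b, a, Y, X). *)
Lemma Dq_nonneg (X Y : R) : 0 <= X -> 0 <= Y -> 0 <= Dq a b c d X Y.
Proof.
  intros hX hY.
  set (S := b + c) in *.
  assert (convex : S * Dq a b c d X Y
                   = c * Dq a 0 S d X Y + b * Dq d 0 S a Y X + S * b * c * (X * Y * (X + Y) ^ 2))
    by (unfold Dq, S; ring).
  assert (0 <= Dq a 0 S d X Y) by (apply (Dq_extreme_nonneg a d s); assumption).
  assert (0 <= Dq d 0 S a Y X) by (apply (Dq_extreme_nonneg d a s); lra).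
  assert (0 <= S * b * c * (X * Y * (X + Y) ^ 2)).
  { assert (0 <= (X + Y) ^ 2) by apply pow2_ge_0.
    repeat (assumption || lra || apply Rmult_le_pos). }
  apply (Rmult_le_reg_l S); [assumption |]. nra.
Qed.

Lemma Nq_nonneg (x y w1 w2 : R) : 0 <= Nq a b c d x y w1 w2.
Proof.
  assert (hX : 0 <= x ^ 2) by apply pow2_ge_0.
  assert (hY : 0 <= y ^ 2) by apply pow2_ge_0.
  assert (0 <= x ^ 2 * y ^ 2) by (apply Rmult_le_pos; assumption).
  assert (0 <= (x ^ 2) ^ 2) by apply pow2_ge_0.
  assert (0 <= (y ^ 2) ^ 2) by apply pow2_ge_0.
  apply quad_form_nonneg; try nra.
  assert (0 <= Dq a b c d (x ^ 2) (y ^ 2)) by (apply Dq_nonneg; assumption).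
  unfold Dq in *. nra.
Qed.

Lemma increment_off_origin (v1 v2 w1 w2 : R) :
  (forall t, 0 < (v1 + t * w1) ^ 2 + (v2 + t * w2) ^ 2) ->
  dot2 (G_B a b c d (v1, v2)) (w1, w2) <= dot2 (G_B a b c d (v1 + w1, v2 + w2)) (w1, w2).
Proof.
  intros hpos.
  set (f := fun t => Gnum a b c d (v1 + t * w1) (v2 + t * w2) w1 w2
                     / sqrt ((v1 + t * w1) ^ 2 + (v2 + t * w2) ^ 2)).
  set (df := fun t => Nq a b c d (v1 + t * w1) (v2 + t * w2) w1 w2
                      / sqrt ((v1 + t * w1) ^ 2 + (v2 + t * w2) ^ 2) ^ 3).
  assert (hdf : forall t, 0 <= df t).
  { intros t. apply Rdiv_le_0_compat.
    - apply Nq_nonneg.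
    - apply pow_lt, sqrt_lt_R0, hpos. }
  assert (hf : forall t, f t = dot2 (G_B a b c d (v1 + t * w1, v2 + t * w2)) (w1, w2)).
  { intros t. rewrite G_B_dot; [reflexivity |].
    apply Rgt_not_eq, sqrt_lt_R0, hpos. }
  destruct (MVT_cor4 f df 0 1 (fun t _ => segment_derivative a b c d v1 v2 w1 w2 t (hpos t)) 1)
    as [t [ht _]].
  { rewrite Rminus_0_r, Rabs_R1. lra. }
  specialize (hdf t). rewrite !hf, !Rmult_0_l, !Rmult_1_l, !Rplus_0_r in ht. lra.
Qed.

Theorem G_B_monotone : monotone2 (G_B a b c d).
Proof.
  intros [u1 u2] [v1 v2].
  assert (hinc : dot2 (G_B a b c d (v1, v2)) (u1 - v1, u2 - v2)
                 <= dot2 (G_B a b c d (u1, u2)) (u1 - v1, u2 - v2)).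
  { assert (hu : (u1, u2) = (v1 + (u1 - v1), v2 + (u2 - v2))) by (f_equal; ring).
    rewrite hu at 1.
    destruct (Req_dec (v1 * (u2 - v2) - v2 * (u1 - v1)) 0) as [hcol | hcol].
    - apply increment_collinear; lra.
    - apply increment_off_origin, segment_avoids_origin, hcol. }
  unfold dot2, sub2 in *. cbn [fst snd] in *. lra.
Qed.

End MonotonicityRegion.

Corollary G_B_monotone_nonstrict (a b c d : R) :
  0 < a -> 0 < b -> 0 < c -> 0 < d -> cond_nonstrict a b c d -> monotone2 (G_B a b c d).
Proof.
  intros ha hb hc hd [hlow hup].
  pose proof (sqrt_pos (a * d)). pose proof (Rmax_l a d). pose proof (Rmax_r a d).
  apply (G_B_monotone a b c d (sqrt (a * d))); try lra.
  apply sqrt_sqrt. nra.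
Qed.

(* Splitting off the 3-monotone part e |z| z, which is G_B for a = b = c = d = e. *)
Lemma G_B_shift (a b c d e : R) (z : vec2) :
  G_B a b c d z = (fst (G_B (a - e) (b - e) (c - e) (d - e) z) + e * norm2 z * fst z,
                   snd (G_B (a - e) (b - e) (c - e) (d - e) z) + e * norm2 z * snd z).
Proof.
  pose proof (norm2_sq z) as hsq.
  unfold G_B. destruct (Req_EM_T (norm2 z) 0) as [h0 | h0].
  - rewrite h0. cbn [fst snd]. f_equal; ring.
  - cbn [fst snd].
    assert (hnorm : forall t, e * norm2 z * t = e * (fst z ^ 2 + snd z ^ 2) * t / norm2 z)
      by (intros; rewrite <- hsq; field; exact h0).
    rewrite !hnorm. f_equal; field; exact h0.
Qed.

Lemma norm_times_id_three_monotone (u v : vec2) :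
  / 2 * norm2 (sub2 u v) ^ 3 <=
  dot2 (sub2 (norm2 u * fst u, norm2 u * snd u) (norm2 v * fst v, norm2 v * snd v)) (sub2 u v).
Proof.
  destruct u as [u1 u2], v as [v1 v2].
  pose proof (norm2_sq (u1, u2)) as hu. pose proof (norm2_sq (v1, v2)) as hv.
  pose proof (norm2_sq (sub2 (u1, u2) (v1, v2))) as hw.
  pose proof (norm2_ge0 (u1, u2)). pose proof (norm2_ge0 (v1, v2)).
  pose proof (norm2_ge0 (sub2 (u1, u2) (v1, v2))).
  set (ru := norm2 (u1, u2)) in *. set (rv := norm2 (v1, v2)) in *.
  set (rw := norm2 (sub2 (u1, u2) (v1, v2))) in *.
  unfold dot2, sub2 in *. cbn [fst snd] in *.
  assert (cauchy_schwarz : - (u1 * v1 + u2 * v2) <= ru * rv).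
  { assert ((u1 * v1 + u2 * v2) ^ 2 <= (ru * rv) ^ 2).
    { replace ((ru * rv) ^ 2) with ((ru * ru) * (rv * rv)) by ring. rewrite hu, hv.
      assert (0 <= (u1 * v2 - u2 * v1) ^ 2) by apply pow2_ge_0. nra. }
    assert (0 <= ru * rv) by nra. nra. }
  assert (triangle : rw <= ru + rv).
  { assert (rw * rw <= (ru + rv) * (ru + rv)) by nra. nra. }
  assert (identity : (ru * u1 - rv * v1) * (u1 - v1) + (ru * u2 - rv * v2) * (u2 - v2)
                     = (ru + rv) * (/ 2 * (rw * rw) + / 2 * (ru - rv) ^ 2)).
  { rewrite hw.
    replace ((ru * u1 - rv * v1) * (u1 - v1) + (ru * u2 - rv * v2) * (u2 - v2)) with
      (ru * (u1 ^ 2 + u2 ^ 2) + rv * (v1 ^ 2 + v2 ^ 2) - (ru + rv) * (u1 * v1 + u2 * v2)) by ring.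
    replace ((u1 - v1) ^ 2 + (u2 - v2) ^ 2)
      with ((u1 ^ 2 + u2 ^ 2) + (v1 ^ 2 + v2 ^ 2) - 2 * (u1 * v1 + u2 * v2)) by ring.
    rewrite <- hu, <- hv. field. }
  rewrite identity.
  assert (0 <= (ru - rv) ^ 2) by apply pow2_ge_0.
  assert (rw ^ 3 <= (ru + rv) * (rw * rw))
    by (replace (rw ^ 3) with (rw * (rw * rw)) by ring; apply Rmult_le_compat_r; nra).
  nra.
Qed.

Lemma rpow3 (x : R) : 0 <= x -> rpow x 3 = x ^ 3.
Proof.
  intros hx. unfold rpow. destruct (Req_EM_T x 0) as [-> | h].
  - ring.
  - replace 3 with (INR 3) by (simpl; ring). apply Rpower_pow. lra.
Qed.

Lemma three_monotone_of_shift (a b c d e : R) :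
  0 < e -> monotone2 (G_B (a - e) (b - e) (c - e) (d - e)) ->
  alpha_monotone2 3 (G_B a b c d).
Proof.
  intros he hmono. exists (e / 2). split; [lra |].
  intros u v. rewrite rpow3 by apply norm2_ge0.
  pose proof (hmono u v) as hm.
  pose proof (norm_times_id_three_monotone u v) as hp.
  rewrite (G_B_shift a b c d e u), (G_B_shift a b c d e v).
  destruct (G_B (a - e) (b - e) (c - e) (d - e) u) as [p1 p2].
  destruct (G_B (a - e) (b - e) (c - e) (d - e) v) as [q1 q2].
  destruct u as [u1 u2], v as [v1 v2].
  unfold dot2, sub2 in *. cbn [fst snd] in *.
  set (n3 := norm2 (u1 - v1, u2 - v2) ^ 3) in *.
  nra.
Qed.

Lemma sqrt_shift_lower (a d m e : R) :
  0 < m -> m <= a -> m <= d -> 0 <= e <= m ->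
  sqrt (a * d) * (m - e) <= sqrt ((a - e) * (d - e)) * m.
Proof.
  intros hm hma hmd he.
  assert (hl : sqrt (a * d) * (m - e) = sqrt (a * d * ((m - e) * (m - e))))
    by (rewrite (sqrt_mult_alt (a * d)), sqrt_square by nra; reflexivity).
  assert (hr : sqrt ((a - e) * (d - e)) * m = sqrt ((a - e) * (d - e) * (m * m)))
    by (rewrite (sqrt_mult_alt ((a - e) * (d - e))), sqrt_square by nra; reflexivity).
  rewrite hl, hr. apply sqrt_le_1_alt.
  replace (a * d * ((m - e) * (m - e))) with ((a * (m - e)) * (d * (m - e))) by ring.
  replace ((a - e) * (d - e) * (m * m)) with (((a - e) * m) * ((d - e) * m)) by ring.
  assert (0 <= e * (a - m)) by (apply Rmult_le_pos; lra).
  assert (0 <= e * (d - m)) by (apply Rmult_le_pos; lra).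
  apply Rmult_le_compat; nra.
Qed.

Lemma shifted_monotone (a b c d m e : R) :
  0 < m -> m <= a -> m <= d -> 0 < e -> e < m -> e < b -> e < c ->
  2 * e * (sqrt (a * d) / m + 1) <= 2 * sqrt (a * d) - (b + c) ->
  2 * e * (sqrt (a * d) / m + 1) <= b + c - (Rmax a d / 2 - 2 * sqrt (a * d)) ->
  monotone2 (G_B (a - e) (b - e) (c - e) (d - e)).
Proof.
  intros hm hma hmd he hem heb hec hup hlow.
  pose proof (sqrt_shift_lower a d m e hm hma hmd ltac:(lra)) as hsqrt.
  set (s := sqrt (a * d)) in *. set (s' := sqrt ((a - e) * (d - e))) in *.
  assert (hK : s * (m - e) = (s - e * (s / m)) * m) by (field; lra).
  assert (hs' : s - e * (s / m) <= s') by (apply (Rmult_le_reg_r m); nra).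
  assert (0 <= s') by apply sqrt_pos.
  assert (s' * s' = (a - e) * (d - e)) by (apply sqrt_sqrt; nra).
  pose proof (Rmax_l a d). pose proof (Rmax_r a d).
  apply (G_B_monotone _ _ _ _ s'); lra.
Qed.

Lemma exists_small_positive (l : list R) :
  (forall x, In x l -> 0 < x) -> exists e, 0 < e /\ forall x, In x l -> e < x.
Proof.
  induction l as [| y l IH]; intros hpos.
  - exists 1. split; [lra | intros x []].
  - destruct IH as [e0 [he0 hl]]; [intros x hx; apply hpos; right; exact hx |].
    assert (hy : 0 < y) by (apply hpos; left; reflexivity).
    exists (Rmin y e0 / 2).
    pose proof (Rmin_l y e0). pose proof (Rmin_r y e0).
    assert (0 < Rmin y e0) by (apply Rmin_glb_lt; assumption).
    split; [lra |].
    intros x [<- | hx]; [lra |]. specialize (hl x hx). lra.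
Qed.

Theorem G_B_three_monotone (a b c d : R) :
  0 < a -> 0 < b -> 0 < c -> 0 < d -> cond_strict a b c d ->
  alpha_monotone2 3 (G_B a b c d).
Proof.
  intros ha hb hc hd [hlow hup].
  set (m := Rmin a d). set (K := sqrt (a * d) / m).
  assert (hm : 0 < m) by (apply Rmin_glb_lt; assumption).
  assert (hK : 0 <= K) by (apply Rdiv_le_0_compat; [apply sqrt_pos | exact hm]).
  destruct (exists_small_positive
              [m; b; c; (2 * sqrt (a * d) - (b + c)) / (2 * (K + 1));
               (b + c - (Rmax a d / 2 - 2 * sqrt (a * d))) / (2 * (K + 1))])
    as [e [he hsmall]].
  { intros x hx. repeat destruct hx as [<- | hx]; try assumption;
      try (apply Rdiv_lt_0_compat; lra). destruct hx. }
  assert (hscaled : forall g, e < g / (2 * (K + 1)) -> 2 * e * (K + 1) <= g).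
  { intros g hg. apply Rlt_le. replace (2 * e * (K + 1)) with (e * (2 * (K + 1))) by ring.
    apply Rlt_div_r; [lra | exact hg]. }
  apply (three_monotone_of_shift a b c d e he).
  apply (shifted_monotone a b c d m e); try assumption.
  - apply Rmin_l.
  - apply Rmin_r.
  - apply hsmall. simpl; auto.
  - apply hsmall. simpl; auto.
  - apply hsmall. simpl; auto.
  - fold K. apply hscaled, hsmall. simpl; auto 6.
  - fold K. apply hscaled, hsmall. simpl; auto 6.
Qed.

Section RatioConditions.

Variables a d : R.
Hypotheses (ha : 0 < a) (hd : 0 < d).

Let M := Rmax a d.
Let m := Rmin a d.
Let s := sqrt (a * d).

Lemma extremes_facts : 0 < m <= M /\ s * s = M * m /\ 0 < s.
Proof.
  assert (M * m = a * d) by (unfold M, m, Rmax, Rmin; destruct (Rle_dec a d); ring).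
  split; [split; [apply Rmin_glb_lt; assumption | apply Rmin_Rmax] |].
  split; [unfold s; rewrite sqrt_sqrt; nra | apply sqrt_lt_R0; nra].
Qed.

Lemma ratio_le_16 : M / m <= 16 -> M / 2 - 2 * s <= 0.
Proof.
  destruct extremes_facts as [[hm hmM] [hss hs]].
  intros hr. apply (Rle_div_l M 16 m) in hr; [| lra].
  assert (M * M <= M * (16 * m)) by (apply Rmult_le_compat_l; lra).
  assert (M <= 4 * s) by nra. lra.
Qed.

Lemma ratio_eq_64 : M / m = 64 -> M / 2 - 2 * s = 2 * s.
Proof.
  destruct extremes_facts as [[hm hmM] [hss hs]].
  intros hr. assert (hM : M = 64 * m) by (rewrite <- hr; field; lra).
  assert (s = 8 * m) by nra. lra.
Qed.

Lemma ratio_gt_64 : M / m > 64 -> 2 * s < M / 2 - 2 * s.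
Proof.
  destruct extremes_facts as [[hm hmM] [hss hs]].
  intros hr. apply (Rlt_div_r 64 M m) in hr; [| lra].
  assert (M * (64 * m) < M * M) by (apply Rmult_lt_compat_l; lra).
  assert (8 * s < M) by nra. lra.
Qed.

End RatioConditions.

Theorem mainTheorem6 (a b c d : R) (ha : 0 < a) (hb : 0 < b) (hc : 0 < c) (hd : 0 < d) :
  (* (i) *)
  (cond_nonstrict a b c d -> monotone2 (G_B a b c d)) /\
  (cond_strict a b c d -> alpha_monotone2 3 (G_B a b c d)) /\
  (* (ii)(a) *)
  (Rmax a d / Rmin a d <= 16 ->
     (cond_nonstrict a b c d <-> b + c <= 2 * sqrt (a * d)) /\
     (cond_strict a b c d <-> b + c < 2 * sqrt (a * d))) /\
  (* (ii)(b) *)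
  (Rmax a d / Rmin a d = 64 ->
     (cond_nonstrict a b c d <-> b + c = 2 * sqrt (a * d)) /\
     ~ cond_strict a b c d) /\
  (* (ii)(c) *)
  (Rmax a d / Rmin a d > 64 -> ~ cond_nonstrict a b c d).
Proof.
  split; [| split; [| split; [| split]]].
  - apply G_B_monotone_nonstrict; assumption.
  - apply G_B_three_monotone; assumption.
  - unfold cond_nonstrict, cond_strict.
    intros hr. pose proof (ratio_le_16 a d ha hd hr). split; split; intros; lra.
  - unfold cond_nonstrict, cond_strict.
    intros hr. pose proof (ratio_eq_64 a d ha hd hr). split; [split |]; intros; lra.
  - unfold cond_nonstrict.
    intros hr. pose proof (ratio_gt_64 a d ha hd hr). lra.
Qed.
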